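(* Let $n\ge 3$. A permutation $\pi=(\pi_1,\ldots,\pi_n)$ of $\{1,\ldots,n\}$ is convex, i.e. satisfies $\pi_2-\pi_1\le\pi_3-\pi_2\le\cdots\le\pi_n-\pi_{n-1}$, if and only if $\pi$ is one of the following permutations or the reverse $(\pi_n,\ldots,\pi_1)$ of one of them: (i) $(1,2,\ldots,n)$; (ii) $(n,1,2,\ldots,n-1)$; (iii) $(n-1,1,2,\ldots,n-2,n)$; (iv) $\Pi^*_n$.
   Context: $\Pi^*_n$ is the permutation whose matrix is obtained by rotating the permutation matrix of $\pi_{(n)}$ counter-clockwise by $90$ degrees, where $\pi_{(n)}=(p,p+1,p-1,p+2,\ldots,1,2p)$ if $n=2p$ and $\pi_{(n)}=(p+1,p+2,p,p+3,\ldots,2p+1,1)$ if $n=2p+1$ (permutation matrices have $1$ in positions $(i,\pi_i)$). Explicitly, $\Pi^*_n$ lists the even numbers of $\{1,\ldots,n\}$ in decreasing order followed by the odd numbers in increasing order: $\Pi^*_n=(n,n-2,\ldots,2,1,3,\ldots,n-1)$ for $n$ even and $\Pi^*_n=(n-1,n-3,\ldots,2,1,3,\ldots,n)$ for $n$ odd. *)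

From mathcomp Require Import all_boot all_order all_algebra.
Set Implicit Arguments. Unset Strict Implicit. Unset Printing Implicit Defensive.
Import GRing.Theory Num.Theory.

Definition is_perm (n : nat) (s : seq nat) : Prop := perm_eq s (iota 1 n).

Definition convex_perm (s : seq nat) : Prop :=
  forall i : nat, i.+2 < size s ->
    ((nth 0 s i.+1)%:Z - (nth 0 s i)%:Z <= (nth 0 s i.+2)%:Z - (nth 0 s i.+1)%:Z)%R.

Definition perm_id_seq (n : nat) : seq nat := iota 1 n.
Definition perm_ii (n : nat) : seq nat := n :: iota 1 (n - 1).
Definition perm_iii (n : nat) : seq nat := (n - 1) :: rcons (iota 1 (n - 2)) n.
Definition Pi_star (n : nat) : seq nat :=
  rev [seq k <- iota 1 n | ~~ odd k] ++ [seq k <- iota 1 n | odd k].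

From mathcomp Require Import all_boot all_order all_algebra.
From mathcomp Require Import zify.

Set Implicit Arguments.
Unset Strict Implicit.
Unset Printing Implicit Defensive.

Import GRing.Theory Num.Theory.

(* In a convex permutation the maximum n sits at an end,
   since an interior n would exceed the mean of its two smaller neighbours;
   up to reversal it is the last entry, and deleting it leaves a convex
   permutation of {1, ..., n-1}, one of the eight shapes by induction.
   Appending n to each of these shapes either yields a shape of size n or
   breaks convexity at the last three entries. *)

Definition convex_seq (s : seq nat) : Prop :=
  forall i, i.+2 < size s -> 2 * nth 0 s i.+1 <= nth 0 s i + nth 0 s i.+2.

Lemma convex_permE s : convex_perm s <-> convex_seq s.
Proof.
have midpointE (a b c : nat) : ((b%:Z - a%:Z <= c%:Z - b%:Z)%R) = (2 * b <= a + c).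
  by rewrite lerBlDr addrAC lerBrDl -!PoszD lez_nat; lia.
by split=> cvx i lt_i; have := cvx i lt_i; rewrite midpointE.
Qed.

Lemma convex_seq_rev s : convex_seq s -> convex_seq (rev s).
Proof.
move=> cvx i; rewrite size_rev => lt_i; rewrite !nth_rev; try lia.
have := cvx (size s - i.+3).
have -> : (size s - i.+3).+2 = size s - i.+1 by lia.
have -> : (size s - i.+3).+1 = size s - i.+2 by lia.
by move=> /(_ _); lia.
Qed.

Lemma convex_seq_catl s t : convex_seq (s ++ t) -> convex_seq s.
Proof.
move=> cvx i lt_i; have := cvx i; rewrite size_cat !nth_cat !ifT; lia.
Qed.

Lemma convex_seq_triple s t a b c :
  convex_seq (s ++ [:: a, b, c & t]) -> 2 * b <= a + c.
Proof.
move=> /(_ (size s)); rewrite size_cat !nth_cat ltnn subnn !ifF; try lia.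
by rewrite !subSn // subnn /=; apply; lia.
Qed.

Lemma convex_seq_last3 s a b c :
  convex_seq (rcons (rcons (rcons s a) b) c) -> 2 * b <= a + c.
Proof. by rewrite -!cats1 -!catA; apply: convex_seq_triple. Qed.

Lemma convex_seq_max_end s m : uniq s -> convex_seq s -> m \in s ->
  {in s, forall x, x <= m} -> exists t, s = m :: t \/ s = rcons t m.
Proof.
move=> s_uniq cvx m_in; case/splitPr: m_in s_uniq cvx => p [|c q] s_uniq cvx le_m.
  by exists p; right; rewrite cats1.
case/lastP: p => [|p a] in s_uniq cvx le_m *; first by exists (c :: q); left.
rewrite cat_rcons in s_uniq cvx le_m.
have m_mid := convex_seq_triple cvx.
move: s_uniq; rewrite cat_uniq => /and3P[_ _] /= /and3P[].
rewrite !inE => /norP[a_m _] /norP[m_c _] _.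
have a_le : a <= m by apply: le_m; rewrite mem_cat inE eqxx orbT.
have c_le : c <= m by apply: le_m; rewrite mem_cat !inE eqxx !orbT.
lia.
Qed.

Lemma iotaSr m n : iota m n.+1 = rcons (iota m n) (m + n).
Proof. by rewrite -addn1 iotaD cats1. Qed.

Lemma perm_iiS n : perm_ii n.+1 = n.+1 :: iota 1 n.
Proof. by rewrite /perm_ii subn1. Qed.

Lemma perm_iiiSS n : perm_iii n.+2 = n.+1 :: rcons (iota 1 n) n.+2.
Proof. by rewrite /perm_iii subn1 subn2. Qed.

Lemma Pi_starS n :
  Pi_star n.+1 = if odd n.+1 then rcons (Pi_star n) n.+1 else n.+1 :: Pi_star n.
Proof.
rewrite /Pi_star iotaSr !filter_rcons add1n.
by case: (odd n.+1) => /=; rewrite ?rcons_cat ?rev_rcons.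
Qed.

Lemma size_Pi_star n : size (Pi_star n) = n.
Proof. by elim: n => // n IHn; rewrite Pi_starS; case: ifP; rewrite ?size_rcons /= IHn. Qed.

Lemma nth_Pi_star n i : i < n ->
  nth 0 (Pi_star n) i = if i < n./2 then 2 * (n./2 - i) else 2 * (i - n./2) + 1.
Proof.
elim: n i => // n IHn i lt_i; rewrite Pi_starS.
case: ifP => odd_n1.
  rewrite nth_rcons size_Pi_star; case: ltngtP => [i_n|n_i|->]; [|lia|by case: ifP; lia].
  by rewrite IHn //; have -> : n.+1./2 = n./2 by lia.
case: i lt_i => [|i] lt_i; first by rewrite /=; case: ifP; lia.
rewrite -[nth _ _ i.+1]/(nth 0 (Pi_star n) i) IHn; last lia.
by have -> : n.+1./2 = (n./2).+1 by lia.
Qed.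

Lemma convex_iota m n : convex_seq (iota m n).
Proof. by move=> i; rewrite size_iota => lt_i; rewrite !nth_iota; lia. Qed.

Lemma convex_perm_ii n : convex_seq (perm_ii n).
Proof.
case: n => [|n]; first by move=> i.
by rewrite perm_iiS => -[|i] /=; rewrite size_iota => lt_i; rewrite !nth_iota; lia.
Qed.

Lemma convex_perm_iii n : 3 <= n -> convex_seq (perm_iii n).
Proof.
case: n => [|[|n]] // n3; rewrite perm_iiiSS.
move=> [|i] /=; rewrite size_rcons size_iota => lt_i; rewrite !nth_rcons size_iota;
  by do !case: ifPn => ?; rewrite ?nth_iota; lia.
Qed.

Lemma convex_Pi_star n : convex_seq (Pi_star n).
Proof.
move=> i; rewrite size_Pi_star => lt_i; rewrite !nth_Pi_star; try lia.
by move: n./2 => p; do !case: ifP; lia.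
Qed.

Definition convex_shape (n : nat) (s : seq nat) : Prop :=
  s = perm_id_seq n \/ s = rev (perm_id_seq n) \/
  s = perm_ii n \/ s = rev (perm_ii n) \/
  s = perm_iii n \/ s = rev (perm_iii n) \/
  s = Pi_star n \/ s = rev (Pi_star n).

Lemma convex_shape_rev n s : convex_shape n s -> convex_shape n (rev s).
Proof. by case=> [->|[->|[->|[->|[->|[->|[->|->]]]]]]]; rewrite /convex_shape ?revK; tauto. Qed.

Lemma convex_shape_convex n s : 3 <= n -> convex_shape n s -> convex_seq s.
Proof.
move=> n3; have c1 : convex_seq (perm_id_seq n) by exact: convex_iota.
have c2 : convex_seq (perm_ii n) by exact: convex_perm_ii.
have c3 : convex_seq (perm_iii n) by exact: convex_perm_iii.
have c4 : convex_seq (Pi_star n) by exact: convex_Pi_star.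
by case=> [->|[->|[->|[->|[->|[->|[->|->]]]]]]]; first [done | exact: convex_seq_rev].
Qed.

Lemma convex_shape3 s : perm_eq s (iota 1 3) -> convex_seq s -> convex_shape 3 s.
Proof.
rewrite -mem_permutations => s_perm /(_ 0); move: s_perm.
have -> : permutations (iota 1 3) =
  [:: [:: 2; 1; 3]; [:: 1; 2; 3]; [:: 3; 1; 2]; [:: 1; 3; 2]; [:: 2; 3; 1]; [:: 3; 2; 1]].
  by vm_compute.
rewrite !inE => /orP[|/orP[|/orP[|/orP[|/orP[]]]]] /eqP-> /(_ isT) // _.
all: by rewrite /convex_shape; do ![left; reflexivity | right].
Qed.

Lemma convex_shape_rcons m t : 3 <= m -> convex_shape m t ->
  convex_seq (rcons t m.+1) -> convex_shape m.+1 (rcons t m.+1).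
Proof.
case: m => [|[|[|k]]] // _; rewrite /convex_shape.
case=> [->|[->|[->|[->|[->|[->|[->|->]]]]]]] cvx.
- by left; rewrite /perm_id_seq [RHS]iotaSr add1n.
- by do 3 right; left; rewrite perm_iiS rev_cons.
- by do 4 right; left; rewrite perm_iiS perm_iiiSS.
- exfalso; move: cvx; rewrite perm_iiS rev_cons [iota 1 _]/= rev_cons.
  by move=> /convex_seq_last3; lia.
- exfalso; move: cvx; rewrite perm_iiiSS iotaSr -!rcons_cons => /convex_seq_last3; lia.
- move: cvx; rewrite perm_iiiSS rev_cons rev_rcons [iota 1 _]/= rev_cons -rcons_cons.
  (* the exceptions (3,1,2,4) = rev Pi*_4 and (4,2,1,3,5) = Pi*_5 *)
  move=> /convex_seq_last3 k_small; have [->|->] : k = 0 \/ k = 1 by lia.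
  + by do 7 right.
  + by do 6 right; left.
- have [odd_k | even_k] := boolP (odd k).
    by do 6 right; left; rewrite [Pi_star k.+4]Pi_starS !oddS odd_k.
  exfalso; move: cvx; rewrite !Pi_starS !oddS (negPf even_k) /= -!rcons_cons.
  by move=> /convex_seq_last3; lia.
- have [odd_k | even_k] := boolP (odd k).
    exfalso; move: cvx; rewrite !Pi_starS !oddS odd_k /= !rev_cons rev_rcons.
    by move=> /convex_seq_last3; lia.
  by do 7 right; rewrite [Pi_star k.+4]Pi_starS !oddS (negPf even_k) rev_cons.
Qed.

Lemma convex_perm_shape n s :
  3 <= n -> perm_eq s (iota 1 n) -> convex_seq s -> convex_shape n s.
Proof.
elim: n s => // m IHm s; rewrite leq_eqVlt => /predU1P[<- | m3].
  exact: convex_shape3.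
have shape_rcons u t : u = rcons t m.+1 -> perm_eq u (iota 1 m.+1) ->
    convex_seq u -> convex_shape m.+1 u.
  move=> -> t_perm t_cvx; apply: convex_shape_rcons => //; apply: IHm => //.
    by move: t_perm; rewrite iotaSr add1n -!cats1 perm_cat2r.
  by move: t_cvx; rewrite -cats1 => /convex_seq_catl.
move=> s_perm s_cvx.
have [t [s_eq | s_eq]] : exists t, s = m.+1 :: t \/ s = rcons t m.+1.
  apply: convex_seq_max_end => //.
  - by rewrite (perm_uniq s_perm) iota_uniq.
  - by rewrite (perm_mem s_perm) mem_iota; lia.
  - by move=> x; rewrite (perm_mem s_perm) mem_iota; lia.
- rewrite -[s]revK; apply/convex_shape_rev/(shape_rcons _ (rev t)).
  + by rewrite s_eq rev_cons.
  + by rewrite perm_rev.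
  + exact: convex_seq_rev.
- exact: shape_rcons s_eq s_perm s_cvx.
Qed.

Theorem theorem4p4 (n : nat) (s : seq nat) :
  3 <= n -> is_perm n s ->
  (convex_perm s <->
     (s = perm_id_seq n \/ s = rev (perm_id_seq n) \/
      s = perm_ii n \/ s = rev (perm_ii n) \/
      s = perm_iii n \/ s = rev (perm_iii n) \/
      s = Pi_star n \/ s = rev (Pi_star n))).
Proof.
move=> n3 s_perm; rewrite convex_permE; split.
  exact: convex_perm_shape.
exact: convex_shape_convex.
Qed.
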